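(* Let $X$ be a Hausdorff space and define $\Phi(X)=\sup\{L(X\setminus\{x\}) : x\in X\}$. Then $\Phi(X)=L(X)\cdot\psi(X)$.
   Context: $L(Y)$ denotes the Lindelöf number of $Y$ (least infinite cardinal $\mu$ such that every open cover of $Y$ has a subcover of size at most $\mu$), and $\psi(Y)$ the pseudocharacter (least infinite $\mu$ such that every point of $Y$ is the intersection of at most $\mu$ open sets); $X\setminus\{x\}$ carries the subspace topology. All cardinal functions are taken to be infinite. *)

From Stdlib Require Import Classical.

Definition is_topology {T : Type} (op : (T -> Prop) -> Prop) : Prop :=
  op (fun _ => True) /\
  op (fun _ => False) /\
  (forall U V, op U -> op V -> op (fun x => U x /\ V x)) /\
  (forall F : (T -> Prop) -> Prop,
      (forall U, F U -> op U) -> op (fun x => exists U, F U /\ U x)).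

Definition hausdorff {T : Type} (op : (T -> Prop) -> Prop) : Prop :=
  forall x y : T, x <> y ->
    exists U V, op U /\ op V /\ U x /\ V y /\ (forall z, U z -> V z -> False).

Definition subspace_open {T : Type} (op : (T -> Prop) -> Prop) (A : T -> Prop)
  : ({x : T | A x} -> Prop) -> Prop :=
  fun W => exists U, op U /\ forall y : {x : T | A x}, W y <-> U (proj1_sig y).

Definition fam_card_le {T : Type} (D : (T -> Prop) -> Prop) (K : Type) : Prop :=
  exists f : {U : T -> Prop | D U} -> K, forall a b, f a = f b -> a = b.

Definition infinite_type (K : Type) : Prop :=
  exists g : nat -> K, forall m n, g m = g n -> m = n.

Definition lindelof_le {T : Type} (op : (T -> Prop) -> Prop) (K : Type) : Prop :=
  forall C : (T -> Prop) -> Prop,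
    (forall U, C U -> op U) -> (forall x, exists U, C U /\ U x) ->
    exists D : (T -> Prop) -> Prop,
      (forall U, D U -> C U) /\ (forall x, exists U, D U /\ U x) /\ fam_card_le D K.

Definition pseudochar_le {T : Type} (op : (T -> Prop) -> Prop) (K : Type) : Prop :=
  forall x : T,
    exists D : (T -> Prop) -> Prop,
      (forall U, D U -> op U /\ U x) /\
      (forall y, (forall U, D U -> U y) -> y = x) /\ fam_card_le D K.

(* Given a cover of X, drop the point x and cover X \ {x} by at most Phi(X) of its
   members; one more member containing x covers X, so L(X) <= Phi(X).  By Hausdorffness
   X \ {x} is covered by open sets U each missing some open V_U containing x; at most
   Phi(X) of them suffice, and the corresponding V_U meet exactly in {x}, so
   psi(X) <= Phi(X).  Conversely, if {x} is the intersection of a family P of at most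
   psi(X) open sets, then X \ {x} is the union of the sets X \ V for V in P, and a cover
   of X \ {x} together with V covers X; collecting subcovers of size L(X) for each V
   gives a subcover of size at most L(X) * psi(X).
   The cardinal arithmetic kappa * kappa = kappa for infinite kappa is proved from
   Zorn's lemma: a maximal injective pairing A x A -> A on a part A of kappa
   containing a copy of nat either has a complement no larger than A, in which case
   kappa embeds into A, or could be extended to A together with a disjoint copy of A. *)

From Stdlib Require Import Classical ClassicalEpsilon FunctionalExtensionality PropExtensionality ProofIrrelevance Cantor.
From mathcomp Require classical_sets.

Definition card_le (X Y : Type) : Prop :=
  exists f : X -> Y, forall a b, f a = f b -> a = b.

Lemma card_le_trans (X Y Z : Type) : card_le X Y -> card_le Y Z -> card_le X Z.
Proof.
  intros [f Hf] [h Hh]. exists (fun x => h (f x)). intros a b E. apply Hf, Hh, E.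
Qed.

Lemma card_le_prod (X X' Y Y' : Type) :
  card_le X X' -> card_le Y Y' -> card_le (X * Y) (X' * Y').
Proof.
  intros [f Hf] [h Hh]. exists (fun p => (f (fst p), h (snd p))).
  intros [a b] [a' b'] E. injection E as E1 E2. now rewrite (Hf _ _ E1), (Hh _ _ E2).
Qed.

Lemma card_le_subtype_fun {X : Type} (P Q : X -> Prop) :
  card_le {x | P x} {x | Q x} ->
  exists h : X -> X, (forall x, P x -> Q (h x)) /\
    (forall x y, P x -> P y -> h x = h y -> x = y).
Proof.
  intros [j Hj].
  exists (fun x => match excluded_middle_informative (P x) with
           | left px => proj1_sig (j (exist _ x px)) | right _ => x end).
  split.
  - intros x px. destruct excluded_middle_informative; [apply proj2_sig|contradiction].
  - intros x y px py.
    destruct (excluded_middle_informative (P x)) as [px'|]; [|contradiction].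
    destruct (excluded_middle_informative (P y)) as [py'|]; [|contradiction].
    intro E. apply (eq_sig_hprop (fun _ => proof_irrelevance _)) in E.
    apply Hj in E. now injection E.
Qed.

Definition included {U : Type} (A B : U -> Prop) : Prop := forall u, A u -> B u.

Lemma zorn_included {U : Type} (P : (U -> Prop) -> Prop) :
  (forall F : (U -> Prop) -> Prop, (forall S, F S -> P S) ->
     (forall S S', F S -> F S' -> included S S' \/ included S' S) ->
     P (fun u => exists S, F S /\ S u)) ->
  exists M, P M /\ forall N, P N -> included M N -> included N M.
Proof.
  intro Hchain.
  destruct (@classical_sets.Zorn_bigcup U P) as [M [HM Hmax]].
  - intros F HFP HF.
    replace (classical_sets.bigcup F (fun X => X)) with (fun u => exists S, F S /\ S u).
    + exact (Hchain F HFP HF).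
    + apply functional_extensionality; intro u; apply propositional_extensionality.
      split; [intros [S [HS Su]]|intros [S HS Su]]; [exists S|]; eauto.
  - exists M. split; [exact HM|]. intros N HN HMN. apply NNPP; intro HNM.
    exact (Hmax N (conj HMN HNM) HN).
Qed.

Lemma card_le_total (X Y : Type) : card_le X Y \/ card_le Y X.
Proof.
  set (partial_bijection := fun R : X * Y -> Prop =>
         forall p q, R p -> R q -> (fst p = fst q <-> snd p = snd q)).
  destruct (zorn_included partial_bijection) as [M [HM Hmax]].
  { intros F HF Hch p q [S [HS Sp]] [S' [HS' S'q]].
    destruct (Hch S S' HS HS') as [H | H]; [apply (HF S') | apply (HF S)]; auto. }
  destruct (classic (forall x, exists y, M (x, y))) as [Hx | [x0 Hx0]%not_all_ex_not].
  { left. destruct (choice _ Hx) as [f Hf]. exists f. intros a b E.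
    apply (HM _ _ (Hf a) (Hf b)). simpl. now rewrite E. }
  destruct (classic (forall y, exists x, M (x, y))) as [Hy | [y0 Hy0]%not_all_ex_not].
  { right. destruct (choice _ Hy) as [f Hf]. exists f. intros a b E.
    apply (HM _ _ (Hf a) (Hf b)). simpl. now rewrite E. }
  exfalso. apply Hx0. exists y0.
  apply (Hmax (fun p => M p \/ p = (x0, y0))); [|intros p Mp; now left|now right].
  intros p q [Mp | ->] [Mq | ->]; simpl.
  - now apply HM.
  - destruct p as [x y]; simpl; split; intros ->; [elim Hx0|elim Hy0]; eauto.
  - destruct q as [x y]; simpl; split; intros ->; [elim Hx0|elim Hy0]; eauto.
  - tauto.
Qed.

Section SquareCoding.

Variables (K : Type) (g : nat -> K).
Hypothesis g_inj : forall m n, g m = g n -> m = n.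

Record square_coding (A : K -> Prop) (f : K -> K -> K) : Prop := {
  coding_closed : forall a b, A a -> A b -> A (f a b);
  coding_inj : forall a b a' b', A a -> A b -> A a' -> A b' ->
    f a b = f a' b' -> a = a' /\ b = b' }.

Definition seeded (A : K -> Prop) : Prop := forall n, A (g n).

Lemma seed_coding : exists f, square_coding (fun k => exists n, g n = k) f.
Proof.
  destruct (choice (fun k n => (exists m, g m = k) -> g n = k)) as [idx Hidx].
  { intro k. destruct (classic (exists m, g m = k)) as [[m Hm]|Hk].
    - exists m. now intros _.
    - exists 0. now intro. }
  assert (idx_g : forall n, idx (g n) = n) by (intro n; apply g_inj, Hidx; eauto).
  exists (fun a b => g (to_nat (idx a, idx b))). split.
  - eauto.
  - intros a b a' b' [n <-] [m <-] [n' <-] [m' <-] E.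
    apply g_inj, (f_equal of_nat) in E. rewrite !cancel_of_to, !idx_g in E.
    now injection E as -> ->.
Qed.

Lemma coding_embed (A : K -> Prop) (f : K -> K -> K) :
  square_coding A f -> seeded A -> card_le {k | ~ A k} {k | A k} ->
  exists e : K -> K, (forall k, A (e k)) /\ forall k k', e k = e k' -> k = k'.
Proof.
  intros Hf HA Hcompl.
  destruct (card_le_subtype_fun _ _ Hcompl) as [h [hA h_inj]].
  exists (fun k => if excluded_middle_informative (A k) then f (g 0) k else f (g 1) (h k)).
  split.
  - intro k. destruct excluded_middle_informative; apply Hf; auto.
  - intros k k'.
    destruct (excluded_middle_informative (A k)) as [Ak|Ak];
    destruct (excluded_middle_informative (A k')) as [Ak'|Ak'];
      intro E; apply (coding_inj _ _ Hf) in E as [E1 E2]; auto;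
      try (apply g_inj in E1; discriminate).
Qed.

Lemma card_le_square_of_coding (A : K -> Prop) (f : K -> K -> K) :
  square_coding A f -> seeded A -> card_le {k | ~ A k} {k | A k} -> card_le (K * K) K.
Proof.
  intros Hf HA Hcompl. destruct (coding_embed A f Hf HA Hcompl) as [e [eA e_inj]].
  exists (fun p => f (e (fst p)) (e (snd p))). intros [p q] [p' q'] E.
  apply (coding_inj _ _ Hf) in E as [E1 E2]; auto.
  now rewrite (e_inj p p' E1), (e_inj q q' E2).
Qed.

Section Extension.

Variables (A : K -> Prop) (f : K -> K -> K) (H : K -> K).
Hypotheses (Hf : square_coding A f) (HA : seeded A)
  (H_out : forall a, A a -> ~ A (H a))
  (H_inj : forall a a', A a -> A a' -> H a = H a' -> a = a').

Definition doubled (k : K) : Prop := A k \/ exists a, A a /\ H a = k.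

Definition origin (k : K) : K :=
  epsilon (inhabits k) (fun a => A a /\ (a = k \/ H a = k)).

Lemma origin_spec k :
  doubled k -> A (origin k) /\ (A k -> origin k = k) /\ (~ A k -> H (origin k) = k).
Proof.
  intro Bk.
  assert (Hex : exists a, A a /\ (a = k \/ H a = k))
    by (destruct Bk as [Ak | [a [Aa E]]]; eauto).
  destruct (epsilon_spec (inhabits k) _ Hex) as [Ao Eo]. fold (origin k) in Ao, Eo.
  split; [exact Ao | split]; intro Ak; destruct Eo as [Eo | Eo]; auto.
  - rewrite <- Eo in Ak. exfalso. exact (H_out _ Ao Ak).
  - rewrite Eo in Ao. contradiction.
Qed.

Lemma doubled_eq p p' :
  doubled p -> doubled p' -> (A p <-> A p') -> origin p = origin p' -> p = p'.
Proof.
  intros Bp Bp' Ep E.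
  destruct (origin_spec p Bp) as [_ [o1 o2]], (origin_spec p' Bp') as [_ [o1' o2']].
  destruct (classic (A p)) as [Ap | Ap].
  - rewrite <- (o1 Ap), <- (o1' (proj1 Ep Ap)). exact E.
  - rewrite <- (o2 Ap), <- (o2' (fun Ap' => Ap (proj2 Ep Ap'))), E. reflexivity.
Qed.

(* The three parts of [doubled x doubled] outside [A x A] are told apart by the
   first argument of the outer [f]. *)
Definition zone_tag (p q : K) : K :=
  if excluded_middle_informative (A p) then g 0
  else if excluded_middle_informative (A q) then g 1 else g 2.

Lemma zone_tag_seeded p q : A (zone_tag p q).
Proof.
  unfold zone_tag. now repeat destruct excluded_middle_informative.
Qed.

Lemma zone_tag_inj p q p' q' :
  ~ (A p /\ A q) -> ~ (A p' /\ A q') -> zone_tag p q = zone_tag p' q' ->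
  (A p <-> A p') /\ (A q <-> A q').
Proof.
  unfold zone_tag. intros Npq Npq'.
  repeat destruct excluded_middle_informative; intro E;
    try (apply g_inj in E; discriminate); tauto.
Qed.

Definition extended_pairing (p q : K) : K :=
  if excluded_middle_informative (A p /\ A q) then f p q
  else H (f (zone_tag p q) (f (origin p) (origin q))).

Lemma extended_pairing_old a b : A a -> A b -> extended_pairing a b = f a b.
Proof.
  intros Aa Ab. unfold extended_pairing.
  destruct excluded_middle_informative; tauto.
Qed.

Lemma extended_pairing_new p q :
  doubled p -> doubled q -> ~ (A p /\ A q) ->
  A (f (zone_tag p q) (f (origin p) (origin q))) /\
  extended_pairing p q = H (f (zone_tag p q) (f (origin p) (origin q))).
Proof.
  intros Bp Bq Npq. split.
  - apply Hf; [apply zone_tag_seeded|apply Hf; apply origin_spec; assumption..].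
  - unfold extended_pairing. destruct excluded_middle_informative; tauto.
Qed.

Lemma extended_coding : square_coding doubled extended_pairing.
Proof.
  split.
  - intros p q Bp Bq. destruct (classic (A p /\ A q)) as [[Ap Aq] | Npq].
    + left. rewrite extended_pairing_old by assumption. now apply Hf.
    + right. destruct (extended_pairing_new p q Bp Bq Npq) as [In ->]. eauto.
  - intros p q p' q' Bp Bq Bp' Bq'.
    destruct (classic (A p /\ A q)) as [[Ap Aq] | Npq];
    destruct (classic (A p' /\ A q')) as [[Ap' Aq'] | Npq'].
    + rewrite !extended_pairing_old by assumption. now apply Hf.
    + rewrite extended_pairing_old by assumption.
      destruct (extended_pairing_new p' q' Bp' Bq' Npq') as [In ->].
      intro E. exfalso. apply (H_out _ In). rewrite <- E. now apply Hf.
    + rewrite (extended_pairing_old p' q') by assumption.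
      destruct (extended_pairing_new p q Bp Bq Npq) as [In ->].
      intro E. exfalso. apply (H_out _ In). rewrite E. now apply Hf.
    + destruct (extended_pairing_new p q Bp Bq Npq) as [In ->].
      destruct (extended_pairing_new p' q' Bp' Bq' Npq') as [In' ->].
      intro E. apply H_inj in E; [|assumption..].
      destruct (origin_spec p Bp) as [Op _], (origin_spec q Bq) as [Oq _],
        (origin_spec p' Bp') as [Op' _], (origin_spec q' Bq') as [Oq' _].
      destruct (coding_inj _ _ Hf _ _ _ _ (zone_tag_seeded p q)
        (coding_closed _ _ Hf _ _ Op Oq) (zone_tag_seeded p' q')
        (coding_closed _ _ Hf _ _ Op' Oq') E) as [Etag Eorig].
      destruct (coding_inj _ _ Hf _ _ _ _ Op Oq Op' Oq' Eorig) as [Ep Eq].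
      destruct (zone_tag_inj p q p' q' Npq Npq' Etag) as [Sp Sq].
      split; apply doubled_eq; assumption.
Qed.

End Extension.

Lemma coding_extend (A : K -> Prop) (f : K -> K -> K) :
  square_coding A f -> seeded A -> card_le {k | A k} {k | ~ A k} ->
  exists B f', square_coding B f' /\ included A B /\ (exists b, B b /\ ~ A b) /\
    forall a b, A a -> A b -> f' a b = f a b.
Proof.
  intros Hf HA Hsmall. destruct (card_le_subtype_fun _ _ Hsmall) as [H [H_out H_inj]].
  exists (doubled A H), (extended_pairing A f H). split; [|split; [|split]].
  - now apply extended_coding.
  - now left.
  - exists (H (g 0)). split; [right; eauto | apply H_out, HA].
  - apply extended_pairing_old.
Qed.

Definition graph_dom (G : K * K * K -> Prop) (a : K) : Prop := exists c, G (a, a, c).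

(* [G (a, b, c)] reads "[c] codes the pair [(a, b)]"; graphs rather than functions
   are used so that a chain of partial pairings has a union. *)
Record pairing_graph (G : K * K * K -> Prop) : Prop := {
  pairing_functional : forall a b c c', G (a, b, c) -> G (a, b, c') -> c = c';
  pairing_injective : forall a b a' b' c, G (a, b, c) -> G (a', b', c) -> a = a' /\ b = b';
  pairing_closed : forall a b c, G (a, b, c) ->
    graph_dom G a /\ graph_dom G b /\ graph_dom G c;
  pairing_total : forall a b, graph_dom G a -> graph_dom G b -> exists c, G (a, b, c);
  pairing_seeded : seeded (graph_dom G) }.

Definition coding_graph (A : K -> Prop) (f : K -> K -> K) (t : K * K * K) : Prop :=
  let '(a, b, c) := t in A a /\ A b /\ c = f a b.

Lemma graph_dom_coding_graph A f a : graph_dom (coding_graph A f) a <-> A a.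
Proof.
  split; [intros [c [Aa _]]; exact Aa | intro Aa; exists (f a a); now repeat split].
Qed.

Lemma coding_graph_pairing A f :
  square_coding A f -> seeded A -> pairing_graph (coding_graph A f).
Proof.
  intros Hf HA. split.
  - intros a b c c' [_ [_ ->]] [_ [_ ->]]. reflexivity.
  - intros a b a' b' c [Aa [Ab ->]] [Aa' [Ab' E]]. now apply Hf.
  - intros a b c [Aa [Ab ->]]. rewrite !graph_dom_coding_graph.
    repeat split; auto. now apply Hf.
  - intros a b Ha Hb. rewrite graph_dom_coding_graph in Ha, Hb.
    exists (f a b). now repeat split.
  - intro n. apply graph_dom_coding_graph, HA.
Qed.

Lemma pairing_graph_coding G :
  pairing_graph G ->
  exists f, square_coding (graph_dom G) f /\
    forall t, G t <-> coding_graph (graph_dom G) f t.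
Proof.
  intro PG.
  destruct (choice (fun (ab : K * K) c =>
              graph_dom G (fst ab) -> graph_dom G (snd ab) -> G (fst ab, snd ab, c)))
    as [f Hf].
  { intros [a b]. destruct (classic (graph_dom G a /\ graph_dom G b)) as [[Ha Hb] | N].
    - destruct (pairing_total _ PG a b Ha Hb) as [c Hc]. now exists c.
    - exists a. simpl. tauto. }
  assert (Gf : forall a b, graph_dom G a -> graph_dom G b -> G (a, b, f (a, b)))
    by (intros a b; exact (Hf (a, b))).
  exists (fun a b => f (a, b)). split; [split |].
  - intros a b Ha Hb. exact (proj2 (proj2 (pairing_closed _ PG _ _ _ (Gf a b Ha Hb)))).
  - intros a b a' b' Ha Hb Ha' Hb' E.
    apply (pairing_injective _ PG _ _ _ _ (f (a, b)) (Gf a b Ha Hb)).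
    rewrite E. exact (Gf a' b' Ha' Hb').
  - intros [[a b] c]. split.
    + intro Gt. destruct (pairing_closed _ PG _ _ _ Gt) as [Ha [Hb _]].
      repeat split; auto. exact (pairing_functional _ PG _ _ _ _ Gt (Gf a b Ha Hb)).
    + intros [Ha [Hb ->]]. exact (Gf a b Ha Hb).
Qed.

Lemma pairing_graph_union (F : (K * K * K -> Prop) -> Prop) :
  (forall G, F G -> pairing_graph G \/ forall t, ~ G t) ->
  (forall G G', F G -> F G' -> included G G' \/ included G' G) ->
  pairing_graph (fun t => exists G, F G /\ G t) \/
  forall t, ~ exists G, F G /\ G t.
Proof.
  intros HF Hchain. set (U := fun t => exists G, F G /\ G t).
  destruct (classic (exists t, U t)) as [[t0 [G0 [FG0 G0t0]]] | Hempty].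
  2:{ right. intros t Ut. apply Hempty. now exists t. }
  left.
  assert (member : forall G t, F G -> G t -> pairing_graph G).
  { intros G t FG Gt. destruct (HF G FG) as [PG | EG]; [exact PG | now elim (EG t)]. }
  assert (common : forall t t', U t -> U t' -> exists G, F G /\ G t /\ G t').
  { intros t t' [G [FG Gt]] [G' [FG' G't']].
    destruct (Hchain G G' FG FG') as [H | H]; [exists G' | exists G]; auto. }
  assert (dom_mono : forall G a, F G -> graph_dom G a -> graph_dom U a).
  { intros G a FG [c Gc]. exists c, G. auto. }
  split.
  - intros a b c c' Ut Ut'. destruct (common _ _ Ut Ut') as [G [FG [Gt Gt']]].
    exact (pairing_functional _ (member _ _ FG Gt) _ _ _ _ Gt Gt').
  - intros a b a' b' c Ut Ut'. destruct (common _ _ Ut Ut') as [G [FG [Gt Gt']]].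
    exact (pairing_injective _ (member _ _ FG Gt) _ _ _ _ _ Gt Gt').
  - intros a b c [G [FG Gt]].
    destruct (pairing_closed _ (member _ _ FG Gt) _ _ _ Gt) as [Ha [Hb Hc]].
    repeat split; eapply dom_mono; eauto.
  - intros a b [c Uc] [c' Uc']. destruct (common _ _ Uc Uc') as [G [FG [Gc Gc']]].
    destruct (pairing_total _ (member _ _ FG Gc) a b) as [d Gd]; [eexists; eauto ..|].
    exists d, G. auto.
  - intro n. apply (dom_mono G0 _ FG0), (pairing_seeded _ (member _ _ FG0 G0t0)).
Qed.

Lemma card_le_square_of_seed : card_le (K * K) K.
Proof.
  destruct (zorn_included (fun G => pairing_graph G \/ forall t, ~ G t)) as [M [HM Hmax]].
  { exact pairing_graph_union. }
  assert (PM : pairing_graph M).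
  { destruct HM as [PM | EM]; [exact PM | exfalso].
    destruct seed_coding as [f0 Hf0].
    apply (EM (g 0, g 0, f0 (g 0) (g 0))).
    apply (Hmax (coding_graph (fun k => exists n, g n = k) f0)).
    - left. apply coding_graph_pairing; [exact Hf0 | intro n; eauto].
    - intros t Mt. now apply EM in Mt.
    - repeat split; eauto. }
  destruct (pairing_graph_coding M PM) as [f [Hf HMf]].
  destruct (card_le_total {k | ~ graph_dom M k} {k | graph_dom M k}) as [Hsmall | Hlarge].
  - exact (card_le_square_of_coding _ f Hf (pairing_seeded _ PM) Hsmall).
  - exfalso.
    destruct (coding_extend _ f Hf (pairing_seeded _ PM) Hlarge)
      as [B [f' [Hf' [AB [[b [Bb nAb]] agree]]]]].
    apply nAb. exists (f' b b).
    apply (Hmax (coding_graph B f')).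
    + left. apply coding_graph_pairing; [exact Hf' | intro n; apply AB, (pairing_seeded _ PM)].
    + intros [[x y] z] Mt. apply HMf in Mt as [Ax [Ay ->]].
      repeat split; auto. symmetry. now apply agree.
    + repeat split; auto.
Qed.

End SquareCoding.

Lemma card_le_square (K : Type) : infinite_type K -> card_le (K * K) K.
Proof. intros [g g_inj]. exact (card_le_square_of_seed K g g_inj). Qed.

Lemma fam_card_leP {T K : Type} (D : (T -> Prop) -> Prop) :
  fam_card_le D K <-> exists h : K -> T -> Prop, forall U, D U -> exists k, h k = U.
Proof.
  split.
  - intros [e He].
    destruct (choice (fun k (U : T -> Prop) =>
                forall u : {U | D U}, e u = k -> U = proj1_sig u)) as [h Hh].
    { intro k. destruct (classic (exists u, e u = k)) as [[u Hu] | N].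
      - exists (proj1_sig u). intros v Hv. f_equal. apply He. congruence.
      - exists (fun _ => False). intros u Hu. elim N. now exists u. }
    exists h. intros U DU. exists (e (exist _ U DU)). now rewrite (Hh _ (exist _ U DU)).
  - intros [h Hh].
    destruct (choice (fun (u : {U | D U}) k => h k = proj1_sig u)) as [e He].
    { intros [U DU]. exact (Hh U DU). }
    exists e. intros u v E. apply (eq_sig_hprop (fun _ => proof_irrelevance _)).
    now rewrite <- He, E, He.
Qed.

Lemma fam_card_le_trans {T I K : Type} (D : (T -> Prop) -> Prop) :
  fam_card_le D I -> card_le I K -> fam_card_le D K.
Proof. exact (card_le_trans {U | D U} I K). Qed.

Lemma fam_card_le_sub {T K : Type} (A B : (T -> Prop) -> Prop) :
  included A B -> fam_card_le B K -> fam_card_le A K.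
Proof.
  intros AB [e He]. exists (fun u => e (exist _ (proj1_sig u) (AB _ (proj2_sig u)))).
  intros u v E. apply He in E. apply (eq_sig_hprop (fun _ => proof_irrelevance _)).
  exact (f_equal (@proj1_sig _ _) E).
Qed.

Lemma fam_card_le_image {S T K : Type} (A : (S -> Prop) -> Prop) (B : (T -> Prop) -> Prop)
  (phi : (S -> Prop) -> T -> Prop) :
  fam_card_le A K -> (forall V, B V -> exists U, A U /\ phi U = V) -> fam_card_le B K.
Proof.
  intros [h Hh]%fam_card_leP HB. apply fam_card_leP. exists (fun k => phi (h k)).
  intros V BV. destruct (HB V BV) as [U [AU <-]]. destruct (Hh U AU) as [k <-]. now exists k.
Qed.

Lemma fam_card_le_union {T K : Type} (A B : (T -> Prop) -> Prop) :
  infinite_type K -> fam_card_le A K -> fam_card_le B K ->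
  fam_card_le (fun U => A U \/ B U) K.
Proof.
  intros HK [hA HA]%fam_card_leP [hB HB]%fam_card_leP.
  apply (fam_card_le_trans (I := bool * K)).
  - apply fam_card_leP. exists (fun p : bool * K => if fst p then hA (snd p) else hB (snd p)).
    intros U [AU | BU].
    + destruct (HA U AU) as [k <-]. now exists (true, k).
    + destruct (HB U BU) as [k <-]. now exists (false, k).
  - apply (card_le_trans _ (K * K)); [|exact (card_le_square K HK)].
    destruct HK as [g g_inj]. apply card_le_prod.
    + exists (fun b : bool => g (if b then 0 else 1)).
      intros [|] [|] E; auto; apply g_inj in E; discriminate.
    + exists (fun k => k). auto.
Qed.

Lemma fam_card_le_bigcup {S T K : Type} (P : (S -> Prop) -> Prop)
  (D : (S -> Prop) -> (T -> Prop) -> Prop) :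
  infinite_type K -> fam_card_le P K -> (forall V, P V -> fam_card_le (D V) K) ->
  fam_card_le (fun U => exists V, P V /\ D V U) K.
Proof.
  intros HK [hP HP]%fam_card_leP HD.
  destruct (choice (fun V (h : K -> T -> Prop) =>
              P V -> forall U, D V U -> exists k, h k = U)) as [hD HhD].
  { intro V. destruct (classic (P V)) as [PV | NPV].
    - destruct (proj1 (fam_card_leP _) (HD V PV)) as [h Hh]. now exists h.
    - exists (fun _ _ => False). tauto. }
  apply (fam_card_le_trans (I := K * K)); [|exact (card_le_square K HK)].
  apply fam_card_leP. exists (fun p : K * K => hD (hP (fst p)) (snd p)).
  intros U [V [PV DU]]. destruct (HP V PV) as [k1 <-].
  destruct (HhD _ PV U DU) as [k2 <-]. now exists (k1, k2).
Qed.

Definition lindelof_le_on {T : Type} (op : (T -> Prop) -> Prop) (A : T -> Prop) (K : Type)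
  : Prop :=
  forall C : (T -> Prop) -> Prop,
    (forall U, C U -> op U) -> (forall y, A y -> exists U, C U /\ U y) ->
    exists D : (T -> Prop) -> Prop,
      (forall U, D U -> C U) /\ (forall y, A y -> exists U, D U /\ U y) /\
      fam_card_le D K.

Definition trace {T : Type} (A : T -> Prop) (U : T -> Prop) : {x | A x} -> Prop :=
  fun z => U (proj1_sig z).

Section PuncturedLindelof.

Context {T : Type} (op : (T -> Prop) -> Prop) (K : Type).

Lemma subspace_open_trace (A : T -> Prop) W :
  subspace_open op A W <-> exists U, op U /\ W = trace A U.
Proof.
  split; intros [U [opU HU]]; exists U; split; auto.
  - apply functional_extensionality. intro z. apply propositional_extensionality, HU.
  - intro z. now rewrite HU.
Qed.

Lemma lindelof_le_on_of_subspace (A : T -> Prop) :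
  lindelof_le (subspace_open op A) K -> lindelof_le_on op A K.
Proof.
  intros HL C HC Hcov.
  destruct (HL (fun W => exists U, C U /\ W = trace A U)) as [D' [D'C [D'cov HD']]].
  { intros W [U [CU ->]]. apply subspace_open_trace. eauto. }
  { intros [y Ay]. destruct (Hcov y Ay) as [U [CU Uy]].
    exists (trace A U). split; [now exists U | exact Uy]. }
  destruct (choice (fun W U => (exists U, C U /\ W = trace A U) -> C U /\ W = trace A U))
    as [lift Hlift].
  { intro W. destruct (classic (exists U, C U /\ W = trace A U)) as [[U HU] | N].
    - now exists U.
    - exists (fun _ => False). tauto. }
  exists (fun U => exists W, D' W /\ lift W = U). split; [|split].
  - intros U [W [D'W <-]]. apply Hlift, D'C, D'W.
  - intros y Ay. destruct (D'cov (exist _ y Ay)) as [W [D'W Wy]].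
    exists (lift W). split; [eauto|].
    destruct (Hlift W (D'C W D'W)) as [_ E]. rewrite E in Wy. exact Wy.
  - exact (fam_card_le_image D' _ lift HD' (fun V HV => HV)).
Qed.

Lemma subspace_lindelof_le_of_on (A : T -> Prop) :
  lindelof_le_on op A K -> lindelof_le (subspace_open op A) K.
Proof.
  intros HL C' HC' Hcov.
  destruct (choice (fun W U => subspace_open op A W -> op U /\ W = trace A U))
    as [lift Hlift].
  { intro W. destruct (classic (subspace_open op A W)) as [HW | N].
    - apply subspace_open_trace in HW as [U HU]. now exists U.
    - exists (fun _ => False). tauto. }
  destruct (HL (fun U => exists W, C' W /\ lift W = U)) as [D [DC [Dcov HD]]].
  { intros U [W [C'W <-]]. apply Hlift, HC', C'W. }
  { intros y Ay. destruct (Hcov (exist _ y Ay)) as [W [C'W Wy]].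
    exists (lift W). split; [eauto|].
    destruct (Hlift W (HC' W C'W)) as [_ E]. rewrite E in Wy. exact Wy. }
  exists (fun W => C' W /\ D (lift W)). split; [|split].
  - intros W [C'W _]. exact C'W.
  - intros [y Ay]. destruct (Dcov y Ay) as [U [DU Uy]].
    destruct (DC U DU) as [W [C'W <-]]. exists W.
    split; [now split|]. destruct (Hlift W (HC' W C'W)) as [_ E]. rewrite E. exact Uy.
  - apply (fam_card_le_image D _ (trace A) HD).
    intros W [C'W DW]. exists (lift W). split; [exact DW|].
    symmetry. apply Hlift, HC', C'W.
Qed.

Lemma lindelof_le_of_punctured :
  infinite_type K -> (forall x, lindelof_le_on op (fun y => y <> x) K) -> lindelof_le op K.
Proof.
  intros HK Hpunct C HC Hcov. destruct (classic (inhabited T)) as [[x] | NT].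
  - destruct (Hcov x) as [U0 [CU0 U0x]].
    destruct (Hpunct x C HC (fun y _ => Hcov y)) as [D [DC [Dcov HD]]].
    exists (fun U => U = U0 \/ D U). split; [|split].
    + intros U [-> | DU]; auto.
    + intro y. destruct (classic (y = x)) as [-> | Nyx]; [exists U0; auto |].
      destruct (Dcov y Nyx) as [U [DU Uy]]. eauto.
    + apply fam_card_le_union; [exact HK| |exact HD].
      destruct HK as [g _]. apply fam_card_leP. exists (fun _ => U0).
      intros U ->. now exists (g 0).
  - exists (fun _ => False). split; [tauto | split].
    + intro y. elim NT. now constructor.
    + apply fam_card_leP. exists (fun _ _ => False). tauto.
Qed.

Lemma pseudochar_le_of_punctured :
  hausdorff op -> (forall x, lindelof_le_on op (fun y => y <> x) K) -> pseudochar_le op K.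
Proof.
  intros HT2 Hpunct x.
  set (separated := fun U V => op V /\ V x /\ forall z, U z -> V z -> False).
  destruct (Hpunct x (fun U => op U /\ exists V, separated U V)) as [D [DC [Dcov HD]]].
  { intros U [opU _]. exact opU. }
  { intros y Nyx. destruct (HT2 y x Nyx) as [U [V [opU [opV [Uy [Vx disj]]]]]].
    exists U. repeat split; auto. now exists V. }
  destruct (choice (fun U V => (exists V, separated U V) -> separated U V)) as [sep Hsep].
  { intro U. destruct (classic (exists V, separated U V)) as [[V HV] | N].
    - now exists V.
    - exists U. tauto. }
  exists (fun V => exists U, D U /\ sep U = V). split; [|split].
  - intros V [U [DU <-]]. destruct (Hsep U (proj2 (DC U DU))) as [opV [Vx _]]. auto.
  - intros y Hy. apply NNPP. intro Nyx. destruct (Dcov y Nyx) as [U [DU Uy]].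
    destruct (Hsep U (proj2 (DC U DU))) as [_ [_ disj]].
    apply (disj y Uy), Hy. eauto.
  - exact (fam_card_le_image D _ sep HD (fun V HV => HV)).
Qed.

Lemma punctured_lindelof_on :
  infinite_type K -> lindelof_le op K -> pseudochar_le op K ->
  forall x, lindelof_le_on op (fun y => y <> x) K.
Proof.
  intros HK HL Hpsi x C HC Hcov.
  destruct (Hpsi x) as [P [HP [HPx HPcard]]].
  destruct (choice (fun V D => P V ->
              (forall U, D U -> U = V \/ C U) /\ (forall y, exists U, D U /\ U y) /\
              fam_card_le D K)) as [Dsel HDsel].
  { intro V. destruct (classic (P V)) as [PV | NPV]; [|exists (fun _ => False); tauto].
    destruct (HL (fun U => U = V \/ C U)) as [D HD]; [| |now exists D].
    - intros U [-> | CU]; [apply HP, PV | apply HC, CU].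
    - intro y. destruct (classic (y = x)) as [-> | Nyx].
      + exists V. split; [now left | apply HP, PV].
      + destruct (Hcov y Nyx) as [U [CU Uy]]. eauto. }
  exists (fun U => C U /\ exists V, P V /\ Dsel V U). split; [|split].
  - intros U [CU _]. exact CU.
  - intros y Nyx.
    assert (HV : exists V, P V /\ ~ V y).
    { apply NNPP. intro N. apply Nyx, HPx. intros V PV.
      apply NNPP. intro NVy. apply N. eauto. }
    destruct HV as [V [PV NVy]]. destruct (HDsel V PV) as [Dsub [Dcov _]].
    destruct (Dcov y) as [U [DU Uy]].
    destruct (Dsub U DU) as [-> | CU]; [contradiction|].
    exists U. split; [split; [exact CU | eauto] | exact Uy].
  - apply (fam_card_le_sub _ (fun U => exists V, P V /\ Dsel V U)).
    + intros U [_ HU]. exact HU.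
    + apply fam_card_le_bigcup; [exact HK | exact HPcard |].
      intros V PV. apply HDsel, PV.
Qed.

End PuncturedLindelof.

Theorem lemma2p1 (T : Type) (op : (T -> Prop) -> Prop)
  (Htop : is_topology op) (HT2 : hausdorff op)
  (K : Type) (HK : infinite_type K) :
  (forall x : T, lindelof_le (subspace_open op (fun y => y <> x)) K) <->
  (lindelof_le op K /\ pseudochar_le op K).
Proof.
  split.
  - intro H.
    assert (Hpunct : forall x, lindelof_le_on op (fun y => y <> x) K)
      by (intro x; apply lindelof_le_on_of_subspace, H).
    split.
    + exact (lindelof_le_of_punctured op K HK Hpunct).
    + exact (pseudochar_le_of_punctured op K HT2 Hpunct).
  - intros [HL Hpsi] x.
    apply subspace_lindelof_le_of_on, punctured_lindelof_on; assumption.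
Qed.
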